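(* Let $R=\mathbb{F}_q+v\mathbb{F}_q+v^2\mathbb{F}_q$ with $v^3=v$, let $C$ be a linear code of length $n$ over $R$ and $C^\perp$ its dual. Then $\Psi(C)^\perp=\Psi(C^\perp)$, where $\Psi(C)^\perp$ is the dual of $\Psi(C)$ in $\mathbb{F}_q^{3n}$ with respect to the standard inner product. Moreover, if $C$ is self-dual, then $\Psi(C)$ is self-dual.
   Context: $q$ is a prime power and $R=\mathbb{F}_q[v]/\langle v^3-v\rangle$; every element of $R$ is uniquely $a_0+va_1+v^2a_2$ with $a_i\in\mathbb{F}_q$. A linear code of length $n$ over $R$ is an $R$-submodule of $R^n$. The Euclidean inner product on $R^n$ is $x\cdot y=\sum_{i=0}^{n-1}x_iy_i$; $C^\perp=\{x\in R^n: x\cdot y=0\ \forall y\in C\}$, and $C$ is self-dual if $C=C^\perp$. Every $c\in R^n$ can be written uniquely as $c=a_0+va_1+v^2a_2$ with $a_0,a_1,a_2\in\mathbb{F}_q^n$, and the Gray map $\Psi:R^n\to\mathbb{F}_q^{3n}$ is $\Psi(c)=(a_0,\ a_0+a_2,\ a_1)$. *)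

From HB Require Import structures.
From mathcomp Require Import all_boot all_order all_algebra.
Set Implicit Arguments. Unset Strict Implicit. Unset Printing Implicit Defensive.
Import GRing.Theory.
Local Open Scope ring_scope.

(* The ring R = F_q[v]/<v^3 - v>, F_q = F a finite field.
   An element a0 + v a1 + v^2 a2 is represented by the triple ((a0, a1), a2). *)
Definition Rq (F : finFieldType) := (F * F * F)%type.

Section Defs.
Variable F : finFieldType.

Definition c0 (r : Rq F) : F := r.1.1.
Definition c1 (r : Rq F) : F := r.1.2.
Definition c2 (r : Rq F) : F := r.2.

Definition mkR (a0 a1 a2 : F) : Rq F := (a0, a1, a2).

Definition zeroR : Rq F := mkR 0 0 0.
Definition addR (r s : Rq F) : Rq F := mkR (c0 r + c0 s) (c1 r + c1 s) (c2 r + c2 s).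

(* Product in F[v]/<v^3 - v>, using v^3 = v and v^4 = v^2. *)
Definition mulR (r s : Rq F) : Rq F :=
  mkR (c0 r * c0 s)
      (c0 r * c1 s + c1 r * c0 s + c1 r * c2 s + c2 r * c1 s)
      (c0 r * c2 s + c2 r * c0 s + c1 r * c1 s + c2 r * c2 s).

Definition Rword (n : nat) := {ffun 'I_n -> Rq F}.

Definition addW n (x y : Rword n) : Rword n := [ffun i => addR (x i) (y i)].
Definition scaleW n (r : Rq F) (x : Rword n) : Rword n := [ffun i => mulR r (x i)].
Definition zeroW n : Rword n := [ffun => zeroR].

Definition is_linear_code n (C : {set Rword n}) : Prop :=
  [/\ zeroW n \in C,
      forall x y, x \in C -> y \in C -> addW x y \in C
    & forall r x, x \in C -> scaleW r x \in C].

Definition dotR n (x y : Rword n) : Rq F :=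
  mkR (\sum_(i < n) c0 (mulR (x i) (y i)))
      (\sum_(i < n) c1 (mulR (x i) (y i)))
      (\sum_(i < n) c2 (mulR (x i) (y i))).

Definition dualR n (C : {set Rword n}) : {set Rword n} :=
  [set x | [forall y in C, dotR x y == zeroR]].

Definition self_dualR n (C : {set Rword n}) : Prop := C = dualR C.

Definition compW n (k : Rq F -> F) (x : Rword n) : 'rV[F]_n := \row_i k (x i).

Definition Psi n (x : Rword n) : 'rV[F]_(n + n + n) :=
  row_mx (row_mx (compW c0 x) (compW c0 x + compW c2 x)) (compW c1 x).

Definition dotF m (x y : 'rV[F]_m) : F := \sum_(i < m) x 0 i * y 0 i.

Definition dualF m (D : {set 'rV[F]_m}) : {set 'rV[F]_m} :=
  [set x | [forall y in D, dotF x y == 0]].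

End Defs.

Arguments Psi {F n} x.
Arguments dualR {F n} C.
Arguments dualF {F m} D.
Arguments is_linear_code {F n} C.
Arguments self_dualR {F n} C.

(* For the Euclidean product d = x . y in R, a direct computation gives
   Psi(x) . Psi(y) = 2 d_0 + d_2, where d = d_0 + v d_1 + v^2 d_2.  Since
   x . (r y) = r (x . y), testing Psi(x) against Psi(y), Psi(v y) and
   Psi(v^2 y) yields 2 d_0 + d_2, d_1 and d_0 + d_2, which all vanish iff
   d = 0.  As Psi is onto F_q^{3n} and a linear code is closed under scaling,
   this identifies the dual of Psi(C) with Psi of the dual of C. *)
From mathcomp Require Import all_boot all_order all_algebra.
From mathcomp Require Import ring.
Set Implicit Arguments. Unset Strict Implicit. Unset Printing Implicit Defensive.
Import GRing.Theory.
Local Open Scope ring_scope.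

Section GrayMap.
Variables (F : finFieldType) (n : nat).
Implicit Types (x y : Rword F n) (r : Rq F).

Lemma dotF_row_mx m k (a c : 'rV[F]_m) (b d : 'rV[F]_k) :
  dotF (row_mx a b) (row_mx c d) = dotF a c + dotF b d.
Proof.
rewrite /dotF big_split_ord /=; congr (_ + _); apply: eq_bigr => i _;
  by rewrite ?row_mxEl ?row_mxEr.
Qed.

Lemma dotF_Psi x y : dotF (Psi x) (Psi y) = c0 (dotR x y) *+ 2 + c2 (dotR x y).
Proof.
rewrite /Psi !dotF_row_mx /dotF /dotR /c0 /c2 /= -sumrMnl -!big_split /=.
by apply: eq_bigr => i _; rewrite !mxE /mulR /c0 /c1 /c2 /=; ring.
Qed.

Lemma dotR_scaleWr r x y : dotR x (scaleW r y) = mulR r (dotR x y).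
Proof.
rewrite /dotR /mulR /mkR /c0 /c1 /c2 /= !mulr_sumr -!big_split /=.
by congr (_, _, _); apply: eq_bigr => i _; rewrite ffunE /mulR /c0 /c1 /c2 /=;
  ring.
Qed.

Lemma dotF_Psi_eq0 x y : dotR x y = zeroR F -> dotF (Psi x) (Psi y) = 0.
Proof. by rewrite dotF_Psi => ->; rewrite /c0 /c2 /= mul0rn addr0. Qed.

Lemma dotR_eq0_Psi x y :
  (forall r, dotF (Psi x) (Psi (scaleW r y)) = 0) -> dotR x y = zeroR F.
Proof.
move=> orth; move: (orth (mkR 1 0 0)) (orth (mkR 0 1 0)) (orth (mkR 0 0 1)).
rewrite !dotF_Psi !dotR_scaleWr; case: (dotR x y) => [[d0 d1] d2].
rewrite /mulR /mkR /c0 /c1 /c2 /= => orth1 orthv orthv2.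
have e0 : d0 *+ 2 + d2 = 0 by rewrite -orth1; ring.
have e1 : d1 = 0 by rewrite -orthv; ring.
have e2 : d0 + d2 = 0 by rewrite -orthv2; ring.
have e0' : d0 = 0.
  have -> : d0 = (d0 *+ 2 + d2) - (d0 + d2) by ring.
  by rewrite e0 e2 subrr.
have e2' : d2 = 0 by rewrite -e2 e0' add0r.
by rewrite /zeroR /mkR e0' e1 e2'.
Qed.

Definition unPsi (w : 'rV[F]_(n + n + n)) : Rword F n :=
  [ffun i => mkR (w 0 (lshift n (lshift n i))) (w 0 (rshift (n + n) i))
                 (w 0 (lshift n (rshift n i)) - w 0 (lshift n (lshift n i)))].

Lemma unPsiK : cancel unPsi Psi.
Proof.
move=> w; apply/rowP => j; rewrite /Psi -[j]splitK; case: (split j) => [k|k] /=.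
  rewrite -[k]splitK; case: (split k) => [l|l] /=;
  by rewrite !row_mxEl ?row_mxEr !mxE !ffunE /c0 /c2 /mkR /=; ring.
by rewrite !row_mxEr !mxE !ffunE.
Qed.

Lemma dualF_Psi_image (C : {set Rword F n}) :
  (forall r x, x \in C -> scaleW r x \in C) ->
  dualF (Psi @: C) = Psi @: dualR C.
Proof.
move=> Cscale; apply/setP => w; apply/idP/idP.
- rewrite inE => /forallP orth_w; rewrite -[w]unPsiK imset_f // inE.
  apply/forallP => c; apply/implyP => cC; apply/eqP/dotR_eq0_Psi => r.
  by rewrite unPsiK; apply/eqP; apply: (implyP (orth_w _)); rewrite imset_f ?Cscale.
- case/imsetP => x; rewrite inE => /forallP orth_x ->; rewrite inE.
  apply/forallP => z; apply/implyP => /imsetP [c cC ->].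
  have orth_xc : dotR x c = zeroR F by apply/eqP; exact: (implyP (orth_x c) cC).
  by rewrite dotF_Psi_eq0.
Qed.

End GrayMap.

Theorem theorem6 (F : finFieldType) (n : nat) (C : {set Rword F n}) :
  is_linear_code C ->
  dualF (Psi @: C) = Psi @: dualR C /\
  (self_dualR C -> dualF (Psi @: C) = Psi @: C).
Proof.
move=> [_ _ Cscale]; have dualPsiC := dualF_Psi_image Cscale.
by split=> // selfdual; rewrite dualPsiC -selfdual.
Qed.
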